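(* Consider the two-source game ($m=2$) with $n_1\ge n_2\ge 0$ and $q\in[0,1)$. Let $\mathbf p$ be an arbitrary pure strategy profile and let $u_1,u_2$ be the numbers of users of $N_1$ and $N_2$, respectively, that choose DP under $\mathbf p$. Define $$t_1(x)=\frac{q\mu/\phi+x(1+\bar q^2)+(n_1+1)\bar q-n_2\bar q^2}{2\bar q},\qquad t_2(x)=\frac{q\mu/\phi+x(1+\bar q^2)+(n_2+1)\bar q-n_1\bar q^2}{2\bar q}.$$ Then: [1] if (a) $u_1=n_1$ and $u_2<n_2$, or (b) $u_1=0$ and $u_2>0$, then $\mathbf p$ is not a Nash equilibrium; [2] if $u_1\in[0,n_1)$ and $u_2\in[0,n_2)$, then $\mathbf p$ is a Nash equilibrium if and only if $u_1\ge t_1(u_2)-1$ and $u_2\ge t_2(u_1)-1$; [3] if $u_1\in(0,n_1)$ and $u_2=n_2$, then $\mathbf p$ is a Nash equilibrium if and only if $u_1\in[t_1(u_2)-1,\,t_1(u_2)]$; [4] if $u_1=n_1$ and $u_2=n_2$, then $\mathbf p$ is a Nash equilibrium if and only if $n_1\bar q\le q\mu/\phi+n_2+\bar q$.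
   Context: Two-source network: sources $s_1,s_2$ and destination $d$; source $s_i$ has a set $N_i$ of $n_i$ users. Each user generates an independent Poisson flow of packets of rate $\phi>0$; each direct link $(s_i,d)$ has service rate $\mu>0$; the sidelink between $s_1$ and $s_2$ loses packets independently with probability $q$, and $\bar q=1-q$. Only pure strategies are considered: a user of $N_1$ chooses DP $(s_1,d)$ or IP $(s_1,s_2,d)$; a user of $N_2$ chooses DP $(s_2,d)$ or IP $(s_2,s_1,d)$. With $u_i$ users of $N_i$ on DP, the traffic rates are $T_1=u_1\phi+(n_2-u_2)\bar q\phi$ and $T_2=u_2\phi+(n_1-u_1)\bar q\phi$. The loss rate of a user of $N_i$ is $\phi\frac{T_i}{T_i+\mu}$ on DP and $\phi\left(q+\bar q\frac{T_j}{T_j+\mu}\right)$ on IP to $s_j$, $j\ne i$ (traffic rates include the user's own traffic). A Nash equilibrium is a pure profile in which no user can strictly decrease its loss rate by unilaterally switching its route. *)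

From HB Require Import structures.
From mathcomp Require Import all_boot all_order all_algebra.
Set Implicit Arguments. Unset Strict Implicit. Unset Printing Implicit Defensive.
Import Order.TTheory GRing.Theory Num.Theory.
Local Open Scope ring_scope.

(* A pure strategy of the users of N_i: true = DP (direct path), false = IP. *)
Definition profile (n : nat) := {ffun 'I_n -> bool}.

Definition dpcount (n : nat) (p : profile n) : nat := #|[pred k | p k]|.

Definition upd (n : nat) (p : profile n) (k : 'I_n) (b : bool) : profile n :=
  [ffun j => if j == k then b else p j].

Definition traffic {R : realFieldType} (phi q : R) (ui nj uj : nat) : R :=
  ui%:R * phi + (nj - uj)%:R * (1 - q) * phi.

Definition loss_DP {R : realFieldType} (phi mu Ti : R) : R := phi * (Ti / (Ti + mu)).
Definition loss_IP {R : realFieldType} (phi mu q Tj : R) : R :=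
  phi * (q + (1 - q) * (Tj / (Tj + mu))).

Definition loss1 {R : realFieldType} (phi mu q : R) (n1 n2 : nat)
  (p1 : profile n1) (p2 : profile n2) (k : 'I_n1) : R :=
  let u1 := dpcount p1 in let u2 := dpcount p2 in
  if p1 k then loss_DP phi mu (traffic phi q u1 n2 u2)
  else loss_IP phi mu q (traffic phi q u2 n1 u1).

Definition loss2 {R : realFieldType} (phi mu q : R) (n1 n2 : nat)
  (p1 : profile n1) (p2 : profile n2) (k : 'I_n2) : R :=
  let u1 := dpcount p1 in let u2 := dpcount p2 in
  if p2 k then loss_DP phi mu (traffic phi q u2 n1 u1)
  else loss_IP phi mu q (traffic phi q u1 n2 u2).

Definition is_NE {R : realFieldType} (phi mu q : R) (n1 n2 : nat)
  (p1 : profile n1) (p2 : profile n2) : Prop :=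
  (forall (k : 'I_n1) (b : bool),
     ~ (loss1 phi mu q (upd p1 k b) p2 k < loss1 phi mu q p1 p2 k)) /\
  (forall (k : 'I_n2) (b : bool),
     ~ (loss2 phi mu q p1 (upd p2 k b) k < loss2 phi mu q p1 p2 k)).

Definition t1 {R : realFieldType} (phi mu q : R) (n1 n2 : nat) (x : R) : R :=
  (q * mu / phi + x * (1 + (1 - q) ^+ 2) + (n1%:R + 1) * (1 - q)
     - n2%:R * (1 - q) ^+ 2) / (2 * (1 - q)).

Definition t2 {R : realFieldType} (phi mu q : R) (n1 n2 : nat) (x : R) : R :=
  (q * mu / phi + x * (1 + (1 - q) ^+ 2) + (n2%:R + 1) * (1 - q)
     - n1%:R * (1 - q) ^+ 2) / (2 * (1 - q)).

From mathcomp Require Import all_boot all_order all_algebra.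
From mathcomp Require Import ring lra.
Import Order.TTheory GRing.Theory Num.Theory.
Local Open Scope ring_scope.
Set Implicit Arguments. Unset Strict Implicit.

(** Writing [T_i] for the traffic at [s_i], the DP loss of a user of [N_i] minus
    its IP loss is [((1-q) T_i - T_j - q mu)] times a positive factor, so a
    unilateral switch is profitable exactly when a linear inequality in the
    numbers of DP users fails. Hence a profile is a Nash equilibrium iff four
    such inequalities hold, one for the DP and one for the IP users of each
    group (when present). Divided by [phi], the IP condition of [N_i] reads
    [u_i >= t_i(u_j) - 1] and the DP condition of [N_1] reads [u_1 <= t_1(u_2)].
    The IP condition of one group implies the DP condition of the other, which
    disposes of the DP conditions in [2] and [3]; in the profiles of [1] one of
    the required conditions fails outright. *)

Lemma upd_id n (p : profile n) k : upd p k (p k) = p.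
Proof. by apply/ffunP => j; rewrite ffunE; case: eqP => // ->. Qed.

Lemma upd_at n (p : profile n) k b : upd p k b k = b.
Proof. by rewrite ffunE eqxx. Qed.

Lemma dpcount_upd n (p : profile n) k b :
  (dpcount (upd p k b) + p k = dpcount p + b)%N.
Proof.
rewrite /dpcount (cardD1 k [pred j | upd p k b j]) (cardD1 k [pred j | p j]).
have -> : #|[predD1 [pred j | upd p k b j] & k]| = #|[predD1 [pred j | p j] & k]|.
  by apply: eq_card => j; rewrite !inE ffunE; case: eqP.
by rewrite !inE upd_at addnC [RHS]addnC addnCA.
Qed.

Lemma dpcount_le n (p : profile n) : (dpcount p <= n)%N.
Proof. by rewrite -[X in (_ <= X)%N]card_ord max_card. Qed.

Lemma dpcount_gt0P n (p : profile n) : reflect (exists k, p k) (0 < dpcount p)%N.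
Proof. by apply: (iffP card_gt0P) => -[k pk]; exists k. Qed.

Lemma dpcount_ltP n (p : profile n) : reflect (exists k, ~~ p k) (dpcount p < n)%N.
Proof.
rewrite -[X in (_ < X)%N]card_ord -(cardC [pred k | p k]) -{1}[dpcount p]addn0 ltn_add2l.
by apply: (iffP card_gt0P) => -[k pk]; exists k.
Qed.

Section Losses.
Variables (R : realFieldType) (phi mu q : R).
Hypotheses (phi_gt0 : 0 < phi) (mu_gt0 : 0 < mu).

Lemma loss_DP_sub_IP (T1 T2 : R) : T1 + mu != 0 -> T2 + mu != 0 ->
  loss_DP phi mu T1 - loss_IP phi mu q T2
  = ((1 - q) * T1 - (T2 + q * mu)) * (phi * mu / ((T1 + mu) * (T2 + mu))).
Proof. by move=> T1mu_neq0 T2mu_neq0; rewrite /loss_DP /loss_IP; field; apply/andP. Qed.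

Lemma loss_weight_gt0 (T1 T2 : R) : 0 <= T1 -> 0 <= T2 ->
  0 < phi * mu / ((T1 + mu) * (T2 + mu)).
Proof. by move=> T1_ge0 T2_ge0; rewrite divr_gt0 ?mulr_gt0 ?ltr_wpDl. Qed.

Lemma ler_loss_DP_IP (T1 T2 : R) : 0 <= T1 -> 0 <= T2 ->
  (loss_DP phi mu T1 <= loss_IP phi mu q T2) = ((1 - q) * T1 <= T2 + q * mu).
Proof.
move=> T1_ge0 T2_ge0; rewrite -subr_le0 loss_DP_sub_IP ?gt_eqF ?ltr_wpDl //.
by rewrite pmulr_lle0 ?loss_weight_gt0 // subr_le0.
Qed.

Lemma ler_loss_IP_DP (T1 T2 : R) : 0 <= T1 -> 0 <= T2 ->
  (loss_IP phi mu q T2 <= loss_DP phi mu T1) = (T2 + q * mu <= (1 - q) * T1).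
Proof.
move=> T1_ge0 T2_ge0; rewrite -subr_ge0 loss_DP_sub_IP ?gt_eqF ?ltr_wpDl //.
by rewrite pmulr_lge0 ?loss_weight_gt0 // subr_ge0.
Qed.

Lemma traffic_ge0 ui nj uj : q <= 1 -> 0 <= traffic phi q ui nj uj.
Proof.
move=> q_le1; have phi_ge0 := ltW phi_gt0.
by rewrite /traffic addr_ge0 ?mulr_ge0 ?ler0n ?subr_ge0.
Qed.

Lemma trafficE ui nj uj : (uj <= nj)%N ->
  traffic phi q ui nj uj = (ui%:R + (nj%:R - uj%:R) * (1 - q)) * phi.
Proof. by move=> le_uj_nj; rewrite /traffic natrB //; ring. Qed.

Lemma addr_divMr (y z : R) : y * phi + z = (y + z / phi) * phi.
Proof. by rewrite mulrDl divfK ?lt0r_neq0. Qed.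

End Losses.

(* No-switch conditions of a user whose group has [a] of its [na] users on DP
   while the other group has [b] of its [nb] users on DP, traffic being counted
   in units of [phi] and [c] standing for [q * mu / phi]: [dp_stable] for a DP
   user (its switch leaves [a - 1] DP users in its group), [ip_stable] for an
   IP user (its switch makes [a + 1]). *)
Definition dp_stable {R : realFieldType} (q c a b na nb : R) : bool :=
  (1 - q) * (a + (nb - b) * (1 - q)) <= b + (na + 1 - a) * (1 - q) + c.

Definition ip_stable {R : realFieldType} (q c a b na nb : R) : bool :=
  b + (na - a) * (1 - q) + c <= (1 - q) * (a + 1 + (nb - b) * (1 - q)).

Definition group_stable {R : realFieldType} (phi mu q : R) n1 n2
    (p1 : profile n1) (p2 : profile n2) : Prop :=
  forall (k : 'I_n1) (b : bool),
    ~ (loss1 phi mu q (upd p1 k b) p2 k < loss1 phi mu q p1 p2 k).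

Lemma is_NE_group_stable {R : realFieldType} (phi mu q : R) n1 n2
    (p1 : profile n1) (p2 : profile n2) :
  is_NE phi mu q p1 p2 = (group_stable phi mu q p1 p2 /\ group_stable phi mu q p2 p1).
Proof. by []. Qed.

Lemma not_ltr (R : realFieldType) (x y : R) : ~ (x < y) <-> y <= x.
Proof. by rewrite ltNge; split=> [/negP/negbNE | ->]. Qed.

Section GroupStability.
Variables (R : realFieldType) (phi mu q : R) (n1 n2 : nat).
Variables (p1 : profile n1) (p2 : profile n2).
Hypotheses (phi_gt0 : 0 < phi) (mu_gt0 : 0 < mu) (q_le1 : q <= 1).

Lemma user_stable (k : 'I_n1) :
  (forall b, ~ (loss1 phi mu q (upd p1 k b) p2 k < loss1 phi mu q p1 p2 k)) <->
  (if p1 k then dp_stable q (q * mu / phi) (dpcount p1)%:R (dpcount p2)%:R n1%:R n2%:R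
   else ip_stable q (q * mu / phi) (dpcount p1)%:R (dpcount p2)%:R n1%:R n2%:R).
Proof.
have switch_stable : (forall b, ~ (loss1 phi mu q (upd p1 k b) p2 k < loss1 phi mu q p1 p2 k))
    <-> ~ (loss1 phi mu q (upd p1 k (~~ p1 k)) p2 k < loss1 phi mu q p1 p2 k).
  split=> [|stable_switch b]; first exact.
  have [->|neq_b] := eqVneq b (p1 k); first by rewrite upd_id ltxx.
  suff -> : b = ~~ p1 k by [].
  by move: neq_b; case: b; case: (p1 k).
rewrite switch_stable not_ltr /loss1 upd_at.
have u1_le := dpcount_le p1; have u2_le := dpcount_le p2.
have := dpcount_upd p1 k (~~ p1 k); have := dpcount_le (upd p1 k (~~ p1 k)).
case: (p1 k) => /=; move: (dpcount (upd _ _ _)) => u1' u1'_le.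
- move=> /eqP; rewrite addn0 addn1 => /eqP <-.
  rewrite ler_loss_DP_IP ?traffic_ge0 // !trafficE // mulrA addr_divMr // ler_pM2r //.
  by rewrite -nat1r /dp_stable addrKA.
- move=> /eqP; rewrite addn0 addn1 => /eqP ->.
  rewrite ler_loss_IP_DP ?traffic_ge0 // !trafficE // mulrA.
  by rewrite -natr1 addr_divMr // ler_pM2r.
Qed.

Lemma group_stableP :
  group_stable phi mu q p1 p2 <->
  ((0 < dpcount p1)%N ->
     dp_stable q (q * mu / phi) (dpcount p1)%:R (dpcount p2)%:R n1%:R n2%:R) /\
  ((dpcount p1 < n1)%N ->
     ip_stable q (q * mu / phi) (dpcount p1)%:R (dpcount p2)%:R n1%:R n2%:R).
Proof.
split=> [stable | [dp_ok ip_ok] k]; last first.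
  apply/user_stable; case p1k: (p1 k); [apply: dp_ok | apply: ip_ok].
    by apply/dpcount_gt0P; exists k.
  by apply/dpcount_ltP; exists k; rewrite p1k.
split=> [/dpcount_gt0P[k p1k] | /dpcount_ltP[k /negPf p1k]];
  by have /user_stable := stable k; rewrite p1k.
Qed.

End GroupStability.

Lemma is_NEP (R : realFieldType) (phi mu q : R) n1 n2 (p1 : profile n1) (p2 : profile n2) :
  0 < phi -> 0 < mu -> q <= 1 ->
  let c := q * mu / phi in
  let a : R := (dpcount p1)%:R in let b : R := (dpcount p2)%:R in
  is_NE phi mu q p1 p2 <->
  [/\ (0 < dpcount p1)%N -> dp_stable q c a b n1%:R n2%:R,
      (dpcount p1 < n1)%N -> ip_stable q c a b n1%:R n2%:R,
      (0 < dpcount p2)%N -> dp_stable q c b a n2%:R n1%:R &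
      (dpcount p2 < n2)%N -> ip_stable q c b a n2%:R n1%:R].
Proof.
move=> phi_gt0 mu_gt0 q_le1 c a b.
rewrite is_NE_group_stable !group_stableP //.
by split=> [[[? ?] [? ?]] | []].
Qed.

Lemma ip_stable_dp_stable (R : realFieldType) (q c a b na nb : R) :
  0 <= q -> q < 1 -> 0 <= c -> 0 <= a -> b <= nb ->
  ip_stable q c a b na nb -> dp_stable q c b a nb na.
Proof.
rewrite /ip_stable /dp_stable => q_ge0 q_lt1 c_ge0 a_ge0 b_le ip.
(* Multiply [ip] by [1 - q] and bound [(1 - q)^2, (1 - q)^3] termwise. *)
have Q_ge0 : 0 <= 1 - q by lra.
have Q'_ge0 : 0 <= 2 - q by lra.
have nb_b_ge0 : 0 <= nb - b by lra.
have := ler_wpM2l Q_ge0 ip.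
have := mulr_ge0 a_ge0 (mulr_ge0 q_ge0 Q'_ge0).
have := mulr_ge0 Q_ge0 q_ge0.
have := mulr_ge0 (mulr_ge0 nb_b_ge0 Q_ge0) (mulr_ge0 q_ge0 Q'_ge0).
have := mulr_ge0 c_ge0 Q'_ge0.
lra.
Qed.

Lemma full_dp_unstable (R : realFieldType) (q c b na nb : R) :
  0 <= q -> q < 1 -> 0 <= c -> nb <= na -> b + 1 <= nb ->
  dp_stable q c na b na nb -> ~~ ip_stable q c b na nb na.
Proof.
rewrite /ip_stable /dp_stable -ltNge => q_ge0 q_lt1 c_ge0 nb_le b_lt dp.
(* [dp] plus the negated goal says
   [(2-q)(na-b-1) + (1-q)(2-q)(nb-b-1) + 1 + (1-q)^2 <= 0]. *)
have Q_ge0 : 0 <= 1 - q by lra.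
have Q'_ge0 : 0 <= 2 - q by lra.
have na_gt : 0 <= na - b - 1 by lra.
have nb_gt : 0 <= nb - b - 1 by lra.
have := mulr_ge0 Q'_ge0 na_gt.
have := mulr_ge0 (mulr_ge0 Q_ge0 Q'_ge0) nb_gt.
have := sqr_ge0 (1 - q).
lra.
Qed.

Lemma no_dp_ip_unstable (R : realFieldType) (q c b na nb : R) :
  0 <= q -> q < 1 -> 0 <= c -> nb <= na -> 1 <= b -> b <= nb ->
  ~~ ip_stable q c 0 b na nb.
Proof.
rewrite /ip_stable -ltNge => q_ge0 q_lt1 c_ge0 nb_le b_ge1 b_le.
(* The negated goal says
   [(b-1)(1+(1-q)^2) + (1-q)(na - nb(1-q)) + q + (1-q)^2 + c <= 0]. *)
have Q_gt0 : 0 < 1 - q by lra.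
have b_ge1' : 0 <= b - 1 by lra.
have na_ge : 0 <= na - nb * (1 - q) by nra.
have := mulr_ge0 b_ge1' (addr_ge0 ler01 (sqr_ge0 (1 - q))).
have := mulr_ge0 (ltW Q_gt0) na_ge.
have := exprn_gt0 2 Q_gt0.
lra.
Qed.

Lemma dp_stable_full (R : realFieldType) (q c na nb : R) :
  dp_stable q c na nb na nb = (na * (1 - q) <= c + nb + (1 - q)).
Proof. by rewrite /dp_stable; apply/idP/idP; lra. Qed.

Lemma dp_stable_full_le (R : realFieldType) (q c na nb : R) :
  0 <= q -> q < 1 -> 0 <= c -> 0 <= na -> na <= nb -> dp_stable q c na nb na nb.
Proof.
rewrite dp_stable_full => q_ge0 q_lt1 c_ge0 na_ge0 na_le.
have Q_le1 : 1 - q <= 1 by lra.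
have := ler_piMr na_ge0 Q_le1.
lra.
Qed.

Lemma ip_stable_t1 (R : realFieldType) (phi mu q a b : R) (na nb : nat) : q < 1 ->
  ip_stable q (q * mu / phi) a b na%:R nb%:R = (t1 phi mu q na nb b - 1 <= a).
Proof.
move=> q_lt1; rewrite /t1 /ip_stable lerBlDr ler_pdivrMr; last by lra.
by apply/idP/idP; lra.
Qed.

Lemma dp_stable_t1 (R : realFieldType) (phi mu q a b : R) (na nb : nat) : q < 1 ->
  dp_stable q (q * mu / phi) a b na%:R nb%:R = (a <= t1 phi mu q na nb b).
Proof.
move=> q_lt1; rewrite /t1 /dp_stable ler_pdivlMr; last by lra.
by apply/idP/idP; lra.
Qed.

Theorem theorem4 (R : realFieldType) (phi mu q : R) (n1 n2 : nat)
  (p1 : profile n1) (p2 : profile n2) :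
  0 < phi -> 0 < mu -> 0 <= q -> q < 1 -> (n2 <= n1)%N ->
  let u1 := dpcount p1 in let u2 := dpcount p2 in
  (* [1] *)
  (((u1 = n1 /\ (u2 < n2)%N) \/ (u1 = 0%N /\ (0 < u2)%N)) ->
     ~ is_NE phi mu q p1 p2) /\
  (* [2] *)
  ((u1 < n1)%N -> (u2 < n2)%N ->
     (is_NE phi mu q p1 p2 <->
      (t1 phi mu q n1 n2 u2%:R - 1 <= u1%:R /\ t2 phi mu q n1 n2 u1%:R - 1 <= u2%:R))) /\
  (* [3] *)
  ((0 < u1)%N -> (u1 < n1)%N -> u2 = n2 ->
     (is_NE phi mu q p1 p2 <->
      (t1 phi mu q n1 n2 u2%:R - 1 <= u1%:R /\ u1%:R <= t1 phi mu q n1 n2 u2%:R))) /\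
  (* [4] *)
  (u1 = n1 -> u2 = n2 ->
     (is_NE phi mu q p1 p2 <->
      n1%:R * (1 - q) <= q * mu / phi + n2%:R + (1 - q))).
Proof.
move=> phi_gt0 mu_gt0 q_ge0 q_lt1 n2_le u1 u2.
have NE := is_NEP p1 p2 phi_gt0 mu_gt0 (ltW q_lt1); rewrite /= -/u1 -/u2 in NE.
have c_ge0 := divr_ge0 (mulr_ge0 q_ge0 (ltW mu_gt0)) (ltW phi_gt0).
have [u1_le u2_le] : (u1 <= n1)%N /\ (u2 <= n2)%N by split; apply: dpcount_le.
have [u1_leR u2_leR] : u1%:R <= n1%:R :> R /\ u2%:R <= n2%:R :> R by rewrite !ler_nat.
have ip_dp := ip_stable_dp_stable q_ge0 q_lt1 c_ge0 (ler0n _ _).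
split; [|split; [|split]].
- case=> [[u1E u2_lt] | [u1E u2_gt0]] /NE[dp1 ip1 _ ip2]; rewrite u1E in dp1 ip1 ip2.
  + have n1_gt0 := leq_ltn_trans (leq0n u2) (leq_trans u2_lt n2_le).
    apply/negP: (ip2 u2_lt).
    by apply: full_dp_unstable (dp1 n1_gt0) => //; rewrite ?natr1 ler_nat.
  + apply/negP: (ip1 (leq_trans (leq_trans u2_gt0 u2_le) n2_le)).
    by apply: no_dp_ip_unstable => //; rewrite ?ler1n ?ler_nat.
- move=> u1_lt u2_lt; rewrite NE -!ip_stable_t1 //.
  split=> [[_ ip1 _ ip2] | [ip1 ip2]]; first by split; [apply: ip1 | apply: ip2].
  by split=> // _; [apply: ip_dp u1_leR ip2 | apply: ip_dp u2_leR ip1].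
- move=> u1_gt0 u1_lt u2E; rewrite NE -ip_stable_t1 // -dp_stable_t1 //.
  split=> [[dp1 ip1 _ _] | [ip1 dp1]]; first by split; [apply: ip1 | apply: dp1].
  split=> // [_|]; last by rewrite u2E ltnn.
  exact: ip_dp u2_leR ip1.
- move=> u1E u2E; rewrite NE u1E u2E -dp_stable_full.
  have dp_le := dp_stable_full_le q_ge0 q_lt1 c_ge0 (ler0n _ _).
  split=> [[dp1 _ _ _] | dp1]; last first.
    by split; rewrite ?ltnn // => _; apply: dp_le; rewrite ler_nat.
  have [n1_0|n1_gt0] := posnP n1; last exact: dp1.
  by apply: dp_le; rewrite n1_0 ler0n.
Qed.
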